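(* Let $X\sim\mu=p^{\mathbb{Z}^d}$, $Y\sim\nu=q^{\mathbb{Z}^d}$ and let $\phi:X\to Y$ be a finitary homomorphism. Let $n,N\in\mathbb{N}$ with $N\ge2n+1$ and let $\hat\phi^n:A^{\mathbb{T}_N^d}\to(B\cup\{*\})^{\mathbb{T}_N^d}$ be the map of the $(\mathbb{T}_N^d,n)$-modeling of $\phi$. Then for every $\hat x\in A^{\mathbb{T}_N^d}$, \[\mu([\hat x])\le\nu([\hat\phi^n(\hat x)]).\]
   Context: $A,B$ are finite alphabets, $p,q$ probability vectors on $A,B$, $\mu=p^{\mathbb{Z}^d}$, $\nu=q^{\mathbb{Z}^d}$. A homomorphism $\phi:X\to Y$ is a measurable shift-commuting map $A^{\mathbb{Z}^d}\to B^{\mathbb{Z}^d}$ with $\phi_*\mu=\nu$. Its coding radius is $R_\phi(x)=\min\{n\in\mathbb{N}\cup\{\infty\}:\text{for }\mu\text{-a.e. }a,\ a|_{[-n,n]^d}=x|_{[-n,n]^d}\Rightarrow\phi(a)_0=\phi(x)_0\}$; $\phi$ is finitary if $R_\phi<\infty$ a.s. Let $*\notin B$. For $n\in\mathbb{N}$ define $\phi^n_0(x)=\phi(x)_0$ if $R_\phi(x)\le n$ and $\phi^n_0(x)=*$ otherwise; up to a $\mu$-null set, $\phi^n_0(x)$ is a function of $x|_{[-n,n]^d}$. Let $\mathbb{T}_N^d=\mathbb{Z}^d/(N\mathbb{Z})^d$; for a configuration $\hat x$ on $\mathbb{T}_N^d$ and $u\in\mathbb{Z}^d$ write $\hat x_u$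 for $\hat x_{u\bmod N}$. For $N\ge 2n+1$, $\hat\phi^n(\hat x)_u$ is the value of $\phi^n_0$ evaluated at the $N$-periodic extension of $T_{-u}\hat x$, where $(T_{-u}\hat x)_v=\hat x_{v+u}$. Cylinder sets: for $\hat x\in A^{\mathbb{T}_N^d}$, $[\hat x]=\{x\in A^{\mathbb{Z}^d}:x_u=\hat x_u\ \forall u\in[1,N]^d\}$ (so $\mu([\hat x])=\prod_{u\in\mathbb{T}_N^d}p(\hat x_u)$); for $\hat y\in(B\cup\{*\})^{\mathbb{T}_N^d}$, $[\hat y]=\{y\in B^{\mathbb{Z}^d}:\hat y_u\in\{*,y_u\}\ \forall u\in[1,N]^d\}$. *)

From HB Require Import structures.
From mathcomp Require Import all_boot all_order all_algebra.
From mathcomp Require Import all_classical all_reals all_analysis.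
Set Implicit Arguments. Unset Strict Implicit. Unset Printing Implicit Defensive.
Import Order.TTheory GRing.Theory Num.Theory.
Local Open Scope classical_set_scope.
Local Open Scope ring_scope.

(* nonempty finite alphabets (nonemptiness is forced by the existence of a
   probability vector; the point is only needed by the measurable-space API) *)
#[short(type="finPointedType")]
HB.structure Definition FinPointed := {T of Finite T & isPointed T}.

Definition Zd (d : nat) := {ffun 'I_d -> int}.

Definition site_cyl (d : nat) (A : Type) : set (set (Zd d -> A)) :=
  [set S | exists (u : Zd d) (a : A), S = [set x | x u = a]].

Definition config (d : nat) (A : pointedType) :=
  g_sigma_algebraType (@site_cyl d A).

Definition prob_vector (R : realType) (A : finType) (p : A -> R) :=
  (forall a, 0 <= p a) /\ \sum_(a : A) p a = 1.

(* mu = p^{Z^d}: the measure of every finite-dimensional cylinder is the product *)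
Definition is_bernoulli (R : realType) (d : nat) (A : finPointedType)
    (p : A -> R) (mu : probability (config d A) R) :=
  forall (s : seq (Zd d)) (w : Zd d -> A), uniq s ->
    mu [set x : config d A | forall u, u \in s -> x u = w u]
    = ((\prod_(u <- s) p (w u))%R)%:E.

(* shift: (T_u x)_v = x_{v-u}, so (T_{-u} x)_v = x_{v+u} *)
Definition shift (d : nat) (A : Type) (u : Zd d) (x : Zd d -> A) : Zd d -> A :=
  fun v => x (v - u).

Definition is_homomorphism (R : realType) (d : nat) (A B : finPointedType)
    (mu : probability (config d A) R) (nu : probability (config d B) R)
    (phi : config d A -> config d B) :=
  [/\ measurable_fun setT phi,
      (forall (u : Zd d) (x : config d A), phi (shift u x) = shift u (phi x))
    & (forall S : set (config d B), measurable S -> nu S = mu (phi @^-1` S))].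

Definition inbox (d : nat) (n : nat) (v : Zd d) := forall i, (absz (v i) <= n)%N.

Definition agree (d : nat) (A : Type) (n : nat) (a x : Zd d -> A) :=
  forall v, inbox n v -> a v = x v.

(* the condition defining R_phi(x) <= m (for the single radius m) *)
Definition coding_ok (R : realType) (d : nat) (A B : finPointedType)
    (mu : probability (config d A) R) (phi : config d A -> config d B)
    (x : config d A) (m : nat) :=
  {ae mu, forall a : config d A, agree m a x -> phi a 0 = phi x 0}.

(* R_phi(x) <= n, where R_phi(x) is the least m with coding_ok m *)
Definition radius_le (R : realType) (d : nat) (A B : finPointedType)
    (mu : probability (config d A) R) (phi : config d A -> config d B)
    (x : config d A) (n : nat) :=
  exists m, (m <= n)%N /\ coding_ok mu phi x m.

Definition finitary (R : realType) (d : nat) (A B : finPointedType)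
    (mu : probability (config d A) R) (phi : config d A -> config d B) :=
  {ae mu, forall x : config d A, exists m, coding_ok mu phi x m}.

(* phi^n_0 with values in B ∪ {*} = option B ( * = None ) *)
Definition phin0 (R : realType) (d : nat) (A B : finPointedType)
    (mu : probability (config d A) R) (phi : config d A -> config d B)
    (n : nat) (x : config d A) : option B :=
  if `[< radius_le mu phi x n >] then Some (phi x 0) else None.

(* F is a version of phi^n_0 as a function of x|_{[-n,n]^d}:
   F depends only on the box and agrees with phi^n_0 mu-a.e. *)
Definition box_version (R : realType) (d : nat) (A B : finPointedType)
    (mu : probability (config d A) R) (phi : config d A -> config d B)
    (n : nat) (F : (Zd d -> A) -> option B) :=
  (forall a x : Zd d -> A, agree n a x -> F a = F x) /\
  {ae mu, forall x : config d A, phin0 mu phi n x = F x}.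

Definition tor (d N : nat) := {ffun 'I_d -> 'I_N}.

Lemma wrap_lt (N : nat) (k : 'I_N) (z : int) :
  (absz ((k%:Z + z) %% N%:Z)%Z < N)%N.
Proof.
have N0 : (0 < N)%N by apply: leq_ltn_trans (ltn_ord k).
have h1 := @modz_ge0 (k%:Z + z) N%:Z.
have h2 := @ltz_pmod (k%:Z + z) N%:Z.
have : (0 <= (k%:Z + z) %% N%:Z)%Z by apply: h1; rewrite eqz_nat -lt0n.
have : ((k%:Z + z) %% N%:Z < N%:Z)%Z by apply: h2; rewrite ltz_nat.
case: ((k%:Z + z) %% N%:Z)%Z => // m; rewrite ltz_nat //.
Qed.

Definition wrap (d N : nat) (t : tor d N) (v : Zd d) : tor d N :=
  [ffun i => Ordinal (wrap_lt (t i) (v i))].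

(* N-periodic extension of T_{-t} xh : v |-> xh_{(v + t) mod N} *)
Definition pext (d N : nat) (A : Type) (t : tor d N) (xh : tor d N -> A) : Zd d -> A :=
  fun v => xh (wrap t v).

(* the torus model \hat phi^n, with phi^n_0 realized by the box function F *)
Definition hatphi (d N : nat) (A B : Type) (F : (Zd d -> A) -> option B)
    (xh : tor d N -> A) : tor d N -> option B :=
  fun t => F (pext t xh).

Definition tlift (d N : nat) (t : tor d N) : Zd d :=
  [ffun i => if (t i == 0 :> nat) then N%:Z else (t i)%:Z].

Definition cylA (d N : nat) (A : Type) (xh : tor d N -> A) : set (Zd d -> A) :=
  [set x | forall t, x (tlift t) = xh t].

Definition cylB (d N : nat) (B : Type) (yh : tor d N -> option B) : set (Zd d -> B) :=
  [set y | forall t, yh t = None \/ yh t = Some (y (tlift t))].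

From Pilot Require Import Defs.
From HB Require Import structures.
From mathcomp Require Import all_boot all_order all_algebra.
From mathcomp Require Import all_classical all_reals all_analysis.
From mathcomp Require Import zify.
Import Order.TTheory GRing.Theory Num.Theory numFieldNormedType.Exports.
Local Open Scope classical_set_scope.
Local Open Scope ring_scope.
Set Implicit Arguments. Unset Strict Implicit. Unset Printing Implicit Defensive.

(* Write a = mu([xh]) and b = nu([hatphi^n xh]).  Repeat xh periodically on a
   box made of (K+2)^d translated copies of the torus: by the Bernoulli property
   this cylinder has measure a^((K+2)^d).  For a configuration x in it, the
   radius-n box around any point u of the K^d inner copies only sees the periodic
   pattern, so phi^n_0(T_{-u} x) is the value hatphi^n prescribes at u; since mu
   is shift invariant, the configurations where phi^n_0(T_{-u} x) is not given by
   the box function form a null set.  Hence phi maps the cylinder, up to a null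
   set, into a cylinder of nu-measure b^(K^d), so a^((K+2)^d) <= b^(K^d) for
   every K, and letting K grow gives a <= b. *)

(* The term 2 K^d on the left is what makes the induction go through. *)
Lemma expn_add2_le (K d : nat) : (2 <= K)%N ->
  (K * K.+2 ^ d + 2 * K ^ d <= K ^ d.+1 + 2 * 3 ^ d * K ^ d)%N.
Proof.
move=> K2; elim: d => [|d IH]; first by rewrite !expn0 expn1; lia.
rewrite !expnS in IH *.
set P := (K * K.+2 ^ d)%N in IH *; set X := (K ^ d)%N in IH *; set T := (3 ^ d)%N in IH *.
have -> : (K * (K.+2 * K.+2 ^ d) = K.+2 * P)%N by rewrite /P mulnCA.
have T1 : (1 <= T)%N by rewrite expn_gt0.
have IH_K2 := leq_mul (leqnn K.+2) IH.
have TX_K : (T * X * 2 <= T * X * K)%N by rewrite leq_mul2l K2 orbT.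
have KX_T : (1 * (K * X) <= T * (K * X))%N by rewrite leq_mul2r T1 orbT.
nia.
Qed.

Lemma le_of_block_powers (R : archiRealFieldType) (a b : R) (d : nat) :
  0 <= a <= 1 -> 0 <= b ->
  (forall K, a ^+ (K.+2 ^ d) <= b ^+ (K ^ d)) -> a <= b.
Proof.
move=> /andP[a0 a1] b0 hK; rewrite leNgt; apply/negP => ba.
have a_gt0 : 0 < a by apply: le_lt_trans ba.
pose c := (2 * 3 ^ d)%N.
(* Raise the hypothesis to the power K, then use expn_add2_le and take K^d-th roots. *)
have root K : (2 <= K)%N -> a ^+ (K + c) <= b ^+ K.
  move=> K2; rewrite -(@ler_pXn2r _ (K ^ d)) ?nnegrE ?exprn_ge0 ?expn_gt0 //; last by lia.
  rewrite -!exprM.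
  apply: le_trans (_ : a ^+ (K.+2 ^ d * K) <= _).
    rewrite ler_wiXn2l //; have := expn_add2_le d K2; rewrite expnS /c; nia.
  by rewrite exprM mulnC exprM ler_pXn2r ?nnegrE ?exprn_ge0 // ?expn_gt0 //; lia.
have geo : (GRing.exp (b / a) : R ^nat) @ \oo --> 0.
  by apply: cvg_expr; rewrite ger0_norm ?divr_ge0 ?(ltW a_gt0) // ltr_pdivrMr // mul1r.
have : a ^+ c <= lim ((GRing.exp (b / a) : R ^nat) @ \oo).
  apply: limr_ge; first by apply/cvg_ex; exists 0.
  near=> K; rewrite expr_div_n ler_pdivlMr ?exprn_gt0 // -exprD addnC root //.
  by near: K; apply: nbhs_infty_ge.
by rewrite (cvg_lim _ geo) // leNgt exprn_gt0.
Unshelve. all: by end_near.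
Qed.

Lemma le_measure_ae d (T : ringOfSetsType d) (R : realFieldType)
    (mu : {measure set T -> \bar R}) (E B : set T) :
  measurable E -> measurable B -> {ae mu, forall x, E x -> B x} ->
  (mu E <= mu B)%E.
Proof.
move=> mE mB [N [mN N0 EBN]].
rewrite -(measureU0 mB mN N0) le_measure ?inE //; first exact: measurableU.
move=> x Ex; have [Bx|nBx] := pselect (B x); [by left | right].
by apply: EBN => /(_ Ex).
Qed.

Definition cyl d (A : Type) (s : seq (Zd d)) (w : Zd d -> A) : set (Zd d -> A) :=
  [set x | forall u, u \in s -> x u = w u].

Definition pcyl d (A : Type) (s : seq (Zd d)) (w : Zd d -> option A) : set (Zd d -> A) :=
  [set x | forall u, u \in s -> w u = None \/ w u = Some (x u)].

Lemma pcylE d (A : pointedType) s (w : Zd d -> option A) :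
  pcyl s w = cyl [seq u <- s | w u != None] (fun u => odflt point (w u)).
Proof.
apply/seteqP; split => x /= xw u.
  by rewrite mem_filter => /andP[+ /xw]; case: (w u) => [a _ [|[->]]|].
move=> us; case wu: (w u) => [a|]; [right | by left].
by rewrite xw ?mem_filter ?wu.
Qed.

Section Bernoulli.
Variables (d : nat) (A : finPointedType).

Lemma measurable_site (u : Zd d) (a : A) :
  measurable ([set x | x u = a] : set (config d A)).
Proof. by apply: sub_sigma_algebra; exists u, a. Qed.

Lemma measurable_cyl s (w : Zd d -> A) : measurable (cyl s w : set (config d A)).
Proof.
elim: s => [|u s IH].
  by rewrite (_ : cyl _ _ = setT) //; apply/seteqP; split => x.
rewrite (_ : cyl _ _ = [set x | x u = w u] `&` cyl s w).
  exact: measurableI (measurable_site _ _) IH.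
apply/seteqP; split => [x xw | x [xu xw] v].
  by split => [|v vs]; apply: xw; rewrite inE ?eqxx ?vs ?orbT.
by rewrite inE => /orP[/eqP -> // | /xw].
Qed.

Lemma measurable_pcyl s (w : Zd d -> option A) : measurable (pcyl s w : set (config d A)).
Proof. by rewrite pcylE; exact: measurable_cyl. Qed.

Lemma measurable_shift (u : Zd d) :
  measurable_fun setT (Defs.shift u : config d A -> config d A).
Proof.
apply: (@measurability _ _ (config d A) (config d A) _ _ (@site_cyl d A)) => //.
by move=> _ [_ [v [a ->]] <-]; rewrite setTI; exact: (measurable_site (v - u) a).
Qed.

Definition cylinders : set (set (config d A)) :=
  [set S | S = set0 \/ exists s w, uniq s /\ S = cyl s w].

Lemma measurable_cylinders : measurable = <<s cylinders >>.
Proof.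
apply/seteqP; split.
  apply: smallest_sub; first exact: smallest_sigma_algebra.
  move=> _ [u [a ->]]; apply: sub_sigma_algebra; right; exists [:: u], (fun=> a).
  split => //; apply/seteqP; split => [x xa v /[!inE] /eqP -> // | x].
  by apply; rewrite inE.
apply: smallest_sub; first exact: sigma_algebra_measurable.
by move=> _ [->|[s [w [_ ->]]]]; [exact: measurable0 | exact: measurable_cyl].
Qed.

Lemma cylinders_setI_closed : setI_closed cylinders.
Proof.
move=> S1 S2 [->|[s1 [w1 [_ ->]]]]; first by left; rewrite set0I.
move=> [->|[s2 [w2 [_ ->]]]]; first by left; rewrite setI0.
have [w12|] := pselect (forall u, u \in s1 -> u \in s2 -> w1 u = w2 u); last first.
  move=> nw12; left; apply/seteqP; split => // x [x1 x2].
  by apply: nw12 => u u1 u2; rewrite -x1 // -x2.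
right; exists (undup (s1 ++ s2)), (fun u => if u \in s1 then w1 u else w2 u).
split; first exact: undup_uniq.
apply/seteqP; split => [x [x1 x2] u | x x12]; rewrite ?mem_undup ?mem_cat.
  by case: ifP => [/x1 | _ /= /x2].
split => u us; rewrite x12 ?mem_undup ?mem_cat ?us ?orbT //.
by case: ifP => // /w12 ->.
Qed.

Variables (R : realType) (p : A -> R) (mu : probability (config d A) R).
Hypothesis mu_bernoulli : is_bernoulli p mu.

Lemma bernoulli_cyl_map (I : eqType) (f : I -> Zd d) (s : seq I) w :
  injective f -> uniq s ->
  mu (cyl (map f s) w) = (\prod_(i <- s) p (w (f i)))%:E.
Proof.
by move=> f_inj s_uniq; rewrite [LHS]mu_bernoulli ?big_map ?map_inj_uniq.
Qed.

Lemma preimage_shift_cyl (u : Zd d) s (w : Zd d -> A) :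
  Defs.shift u @^-1` cyl s w = cyl (map (fun v => v - u) s) (fun v => w (v + u)).
Proof.
apply/seteqP; split => [x xw _ /mapP[v vs ->] | x xw v vs] /=.
  by rewrite subrK; apply: xw.
by rewrite /Defs.shift xw ?subrK //; apply: map_f.
Qed.

Lemma bernoulli_shift_invariant (u : Zd d) (S : set (config d A)) :
  measurable S -> mu (Defs.shift u @^-1` S) = mu S.
Proof.
apply: (@measure_unique _ R _ cylinders (fun=> setT) measurable_cylinders
  cylinders_setI_closed _ _ (pushforward mu (Defs.shift u : config d A -> config d A)) mu).
- by move=> _; right; exists [::], (fun=> point); split => //; apply/seteqP.
- by rewrite bigcup_const.
- exact: measurable_shift.
- move=> ? _ [->|[s [w [s_uniq ->]]]]; first by rewrite !measure0.
  change (mu (Defs.shift u @^-1` cyl s w) = mu (cyl s w)).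
  rewrite preimage_shift_cyl bernoulli_cyl_map //; last exact: addIr.
  by rewrite mu_bernoulli //; under eq_bigr do rewrite subrK.
- move=> ? _; change (mu (Defs.shift u @^-1` setT) < +oo)%E.
  by rewrite preimage_setT probability_setT ltry.
Qed.

Lemma ae_shift (u : Zd d) (P : config d A -> Prop) :
  {ae mu, forall x, P x} -> {ae mu, forall x, P (Defs.shift u x)}.
Proof.
move=> [N [mN N0 PN]]; exists (Defs.shift u @^-1` N); split => [||x /= nP].
- by rewrite -[_ @^-1` _]setTI; apply: measurable_shift.
- by rewrite bernoulli_shift_invariant.
- exact: PN.
Qed.

End Bernoulli.

Section Torus.
Variables (d N : nat) (N_gt0 : (0 < N)%N).

Definition torus0 : tor d N := [ffun=> Ordinal N_gt0].

Definition is_lift (t : tor d N) (v : Zd d) := forall i, (v i = t i %[mod N])%Z.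

Lemma wrap0_lift t v : is_lift t v -> Defs.wrap torus0 v = t.
Proof.
move=> tv; apply/ffunP => i; apply/val_inj; rewrite !ffunE /= add0r tv.
by rewrite modz_small // ltz_nat ltn_ord.
Qed.

Lemma wrap_add_lift t z v : is_lift t v -> Defs.wrap torus0 (z + v) = Defs.wrap t z.
Proof.
move=> tv; apply/ffunP => i; apply/val_inj; rewrite !ffunE /=.
by rewrite add0r -modzDmr tv modzDmr addrC.
Qed.

Lemma tlift_is_lift t : is_lift t (tlift t).
Proof. by move=> i; rewrite ffunE; case: eqP => [->|]; rewrite ?modzz ?mod0z. Qed.

Lemma tlift_inj : injective (@tlift d N).
Proof.
by move=> t t' e; rewrite -(wrap0_lift (tlift_is_lift t)) e (wrap0_lift (tlift_is_lift t')).
Qed.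

(* grid_pt o (t, j) is the copy of t in the block j + o of the tiling of Z^d by
   translates of [0, N)^d.  The outer blocks are -1 .. K and the inner ones 0 .. K-1,
   so a box of radius n < N around an inner point stays in the outer blocks. *)
Definition grid_pt M (o : int) (tj : tor d N * {ffun 'I_d -> 'I_M}) : Zd d :=
  [ffun i => (tj.1 i)%:Z + N%:Z * ((tj.2 i)%:Z + o)].

Lemma grid_pt_is_lift M o (tj : tor d N * {ffun 'I_d -> 'I_M}) :
  is_lift tj.1 (grid_pt o tj).
Proof. by move=> i; rewrite ffunE addrC mulrC modzMDl. Qed.

Lemma grid_pt_inj M o : injective (@grid_pt M o).
Proof.
move=> [t j] [t' j'] e.
have tt' : t = t'.
  rewrite -[t](wrap0_lift (grid_pt_is_lift o (t, j))) e.
  exact: (wrap0_lift (grid_pt_is_lift o (t', j'))).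
subst t'; congr pair; apply/ffunP => i; apply/val_inj.
by have := congr1 (fun v : Zd d => v i) e; rewrite !ffunE /=; nia.
Qed.

Lemma cylA_periodic (A : Type) (xh : tor d N -> A) :
  cylA xh = cyl (map (@tlift d N) (index_enum _)) (pext torus0 xh).
Proof.
apply/seteqP; split => [x xt _ /mapP[t _ ->] | x xt t] /=.
  by rewrite xt /pext (wrap0_lift (tlift_is_lift t)).
by rewrite xt ?map_f ?mem_index_enum // /pext (wrap0_lift (tlift_is_lift t)).
Qed.

Lemma cylB_periodic (B : Type) (yh : tor d N -> option B) :
  cylB yh = pcyl (map (@tlift d N) (index_enum _)) (pext torus0 yh).
Proof.
apply/seteqP; split => [y yt _ /mapP[t _ ->] | y yt t] /=.
  by rewrite /pext (wrap0_lift (tlift_is_lift t)).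
have := yt (tlift t); rewrite map_f ?mem_index_enum //.
by rewrite /pext (wrap0_lift (tlift_is_lift t)); apply.
Qed.

Lemma grid_pt_box K n (tj : tor d N * {ffun 'I_d -> 'I_K}) v :
  (n < N)%N -> inbox n v ->
  exists tj' : tor d N * {ffun 'I_d -> 'I_K.+2}, grid_pt (-1) tj' = v + grid_pt 0 tj.
Proof.
move=> nN vn; pose m i := absz (v i + (tj.1 i)%:Z + N%:Z * ((tj.2 i)%:Z + 1)).
have mE i : (m i)%:Z = v i + (tj.1 i)%:Z + N%:Z * ((tj.2 i)%:Z + 1).
  by rewrite /m; have := vn i; have := ltn_ord (tj.1 i); nia.
have m_lt i : (m i %/ N < K.+2)%N.
  rewrite ltn_divLR //; have := mE i; have := vn i.
  have := ltn_ord (tj.1 i); have := ltn_ord (tj.2 i); nia.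
exists ([ffun i => Ordinal (ltn_pmod (m i) N_gt0)], [ffun i => Ordinal (m_lt i)]).
apply/ffunP => i; rewrite !ffunE /=.
have := mE i; have := divn_eq (m i) N; lia.
Qed.

Lemma agree_shift_grid (A : Type) K n (xh : tor d N -> A) (x : Zd d -> A)
    (tj : tor d N * {ffun 'I_d -> 'I_K}) :
  (n < N)%N -> cyl (map (@grid_pt K.+2 (-1)) (index_enum _)) (pext torus0 xh) x ->
  agree n (Defs.shift (- grid_pt 0 tj) x) (pext tj.1 xh).
Proof.
move=> nN xX v vn; have [tj' e] := grid_pt_box tj nN vn.
rewrite /Defs.shift opprK -e xX ?map_f ?mem_index_enum // /pext e.
by rewrite (wrap_add_lift _ (grid_pt_is_lift 0 tj)).
Qed.

End Torus.

Arguments torus0 {d N} N_gt0.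

Lemma prodr_fst_pairs (R : comPzSemiRingType) (I J : finType) (P : pred I) (F : I -> R) :
  \prod_(ij : I * J | P ij.1) F ij.1 = (\prod_(i | P i) F i) ^+ #|J|.
Proof.
rewrite -prodrXl; under eq_bigr do rewrite -prodr_const.
by rewrite pair_big_dep; apply: eq_bigl => -[i j]; rewrite andbT.
Qed.

Section TorusBernoulli.
Variables (d N : nat) (N_gt0 : (0 < N)%N) (A : finPointedType).
Variables (R : realType) (p : A -> R) (mu : probability (config d A) R).
Hypothesis mu_bernoulli : is_bernoulli p mu.

Lemma bernoulli_periodic_cyl (I : finType) (f : I -> Zd d) (g : I -> tor d N)
    (xh : tor d N -> A) :
  injective f -> (forall i, is_lift (g i) (f i)) ->
  mu (cyl (map f (index_enum I)) (pext (torus0 N_gt0) xh))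
  = (\prod_(i : I) p (xh (g i)))%:E.
Proof.
move=> f_inj fg; rewrite (bernoulli_cyl_map mu_bernoulli) ?index_enum_uniq //.
by congr _%:E; apply: eq_bigr => i _; rewrite /pext (wrap0_lift _ (fg i)).
Qed.

Lemma bernoulli_periodic_pcyl (I : finType) (f : I -> Zd d) (g : I -> tor d N)
    (yh : tor d N -> option A) :
  injective f -> (forall i, is_lift (g i) (f i)) ->
  mu (pcyl (map f (index_enum I)) (pext (torus0 N_gt0) yh))
  = (\prod_(i | yh (g i) != None) p (odflt point (yh (g i))))%:E.
Proof.
move=> f_inj fg; rewrite pcylE filter_map (bernoulli_cyl_map mu_bernoulli) //.
  rewrite big_filter; congr _%:E.
  by apply: eq_big => [i|i _]; rewrite /= /pext (wrap0_lift _ (fg i)).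
exact/filter_uniq/index_enum_uniq.
Qed.

End TorusBernoulli.

Section Modeling.
Variables (R : realType) (d : nat) (A B : finPointedType) (p : A -> R) (q : B -> R).
Variables (mu : probability (config d A) R) (nu : probability (config d B) R).
Variables (phi : config d A -> config d B) (n N : nat) (F : (Zd d -> A) -> option B).
Hypotheses (mu_bernoulli : is_bernoulli p mu) (nu_bernoulli : is_bernoulli q nu).
Hypotheses (phi_hom : is_homomorphism mu nu phi) (F_version : box_version mu phi n F).
Hypothesis n_lt_N : (n < N)%N.
Variable xh : tor d N -> A.

Let N_gt0 : (0 < N)%N := leq_ltn_trans (leq0n n) n_lt_N.
Let yh := hatphi F xh.
Let outer K := cyl (map (@grid_pt d N K.+2 (-1)) (index_enum _)) (pext (torus0 N_gt0) xh).
Let inner K := pcyl (map (@grid_pt d N K 0) (index_enum _)) (pext (torus0 N_gt0) yh).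

Lemma phi_maps_outer_to_inner K : {ae mu, forall x, outer K x -> inner K (phi x)}.
Proof.
have [_ phi_shift _] := phi_hom; have [F_box F_ae] := F_version.
have coded : {ae mu, forall x, forall tj : tor d N * {ffun 'I_d -> 'I_K},
    phin0 mu phi n (Defs.shift (- grid_pt 0 tj) x) = F (Defs.shift (- grid_pt 0 tj) x)}.
  by apply: filter_forall => tj; exact: (ae_shift mu_bernoulli _ F_ae).
move: coded; apply: (filterS (Filter := ae_filter_ringOfSetsType mu)).
move=> x coded xX _ /mapP[tj _ ->].
rewrite /pext (wrap0_lift _ (grid_pt_is_lift _ tj)) /yh /hatphi.
rewrite -(F_box _ _ (agree_shift_grid tj n_lt_N xX)) -coded /phin0.
case: asboolP => _; [right | by left].
by rewrite phi_shift /Defs.shift sub0r opprK.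
Qed.

Lemma outer_le_inner K : (mu (outer K) <= nu (inner K))%E.
Proof.
have [phi_meas _ phi_push] := phi_hom.
rewrite phi_push; last exact: measurable_pcyl.
apply: (@le_measure_ae _ _ _ mu); last exact: phi_maps_outer_to_inner.
  exact: measurable_cyl.
by rewrite -[X in measurable X]setTI; apply: phi_meas => //; exact: measurable_pcyl.
Qed.

Let a := \prod_t p (xh t).
Let b := \prod_(t | yh t != None) q (odflt point (yh t)).

Lemma outer_measure K : mu (outer K) = (a ^+ (K.+2 ^ d))%:E.
Proof.
rewrite (bernoulli_periodic_cyl N_gt0 mu_bernoulli xh (@grid_pt_inj _ _ N_gt0 _ _)
  (grid_pt_is_lift (-1))).
have := @prodr_fst_pairs _ _ {ffun 'I_d -> 'I_K.+2} xpredT (fun t => p (xh t)).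
by rewrite card_ffun !card_ord => <-.
Qed.

Lemma inner_measure K : nu (inner K) = (b ^+ (K ^ d))%:E.
Proof.
rewrite (bernoulli_periodic_pcyl N_gt0 nu_bernoulli yh (@grid_pt_inj _ _ N_gt0 _ _)
  (grid_pt_is_lift 0)).
have := @prodr_fst_pairs _ _ {ffun 'I_d -> 'I_K} (fun t => yh t != None)
  (fun t => q (odflt point (yh t))).
by rewrite card_ffun !card_ord => <-.
Qed.

Lemma block_powers_le K : a ^+ (K.+2 ^ d) <= b ^+ (K ^ d).
Proof. by rewrite -lee_fin -outer_measure -inner_measure outer_le_inner. Qed.

Lemma cylA_measure : mu (cylA xh) = a%:E.
Proof.
rewrite (cylA_periodic N_gt0).
exact: (bernoulli_periodic_cyl N_gt0 mu_bernoulli xh (tlift_inj N_gt0) (@tlift_is_lift _ _)).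
Qed.

Lemma cylB_measure : nu (cylB yh) = b%:E.
Proof.
rewrite (cylB_periodic N_gt0).
exact: (bernoulli_periodic_pcyl N_gt0 nu_bernoulli yh (tlift_inj N_gt0) (@tlift_is_lift _ _)).
Qed.

End Modeling.

Unset Implicit Arguments.

Theorem lemma5 (R : realType) (d : nat) (A B : finPointedType)
    (p : A -> R) (q : B -> R)
    (mu : probability (config d A) R) (nu : probability (config d B) R)
    (phi : config d A -> config d B)
    (n N : nat) (F : (Zd d -> A) -> option B) (xh : tor d N -> A) :
  prob_vector p -> prob_vector q ->
  is_bernoulli p mu -> is_bernoulli q nu ->
  is_homomorphism mu nu phi -> finitary mu phi ->
  (2 * n + 1 <= N)%N ->
  box_version mu phi n F ->
  (mu (cylA xh) <= nu (cylB (hatphi F xh)))%E.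
Proof.
move=> [p_ge0 _] [q_ge0 _] mu_b nu_b phi_hom _ N_ge F_v.
have n_lt_N : (n < N)%N by lia.
have N_gt0 : (0 < N)%N by lia.
have mu_cylA := cylA_measure mu_b n_lt_N xh.
rewrite mu_cylA (cylB_measure F nu_b n_lt_N xh) lee_fin.
apply: (le_of_block_powers (d := d)); last exact: (block_powers_le mu_b nu_b phi_hom F_v).
- rewrite prodr_ge0 //= -lee_fin -mu_cylA probability_le1 //.
  by rewrite (cylA_periodic N_gt0); exact: measurable_cyl.
- exact: prodr_ge0.
Qed.
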